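(* Suppose Assumptions (A1) and (A2) hold. For every $C>0$ and every nonempty $\mathscr{S}\in\mathcal{A}(k)$, $$\inf_{T\in\mathcal{T}^{1/2}_{\mathscr{S}}}\sup_{\tau\in\mathrm{Lip}_C(\mathbb{R}^d)}\mathcal{R}(T,\mathscr{S},\tau)\ge\frac{C}{2}\,\frac{1}{\#\mathcal{S}_P}\sum_{s\in\mathcal{S}_P\setminus\mathscr{S}}\|X_s-X_{N_{\mathscr{S}}(s)}\|.$$
   Context: Sites are indexed by $\mathcal{S}=\{1,\dots,S\}$. $\mathcal{S}_E\subseteq\mathcal{S}$ has $\mathrm{card}(\mathcal{S}_E)\ge2$, and $\mathcal{S}_P\subseteq\mathcal{S}$ is nonempty, with $\#\mathcal{S}_P=\mathrm{card}(\mathcal{S}_P)$. Each site $s$ has covariates $X_s\in\mathbb{R}^d$ and a known standard deviation $\sigma_s>0$. $\|\cdot\|$ is the Euclidean norm, and $\mathrm{Lip}_C(\mathbb{R}^d)$ is the set of $C$-Lipschitz functions $\mathbb{R}^d\to\mathbb{R}$ with respect to $\|\cdot\|$. (A1): the true conditional treatment effect function $\tau$ lies in $\mathrm{Lip}_C(\mathbb{R}^d)$. (A2): the $X_s$ are pairwise distinct. Fix an integer $1\le k<\mathrm{card}(\mathcal{S}_E)$ and set $\mathcal{A}(k)=\{\mathscr{S}\subset\mathcal{S}_E:\mathrm{card}(\mathscr{S})\le k\}$. For a nonempty $\mathscr{S}$ with elements $\mathscr{S}_1<\dots<\mathscr{S}_m$, the data are $\hat\tau_{\mathscr{S}}\sim\mathcal{N}_m(\tau_{\mathscr{S}},\mathrm{diag}(\sigma^2_{\mathscr{S}_1},\dots,\sigma^2_{\mathscr{S}_m}))$,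 where $\tau_{\mathscr{S}}=(\tau(X_{\mathscr{S}_i}))_{i=1}^m$. A treatment rule is a measurable map $T:\mathbb{R}^m\to[0,1]^{\#\mathcal{S}_P}$ with components $T_s$, $s\in\mathcal{S}_P$. $\mathcal{T}^{1/2}_{\mathscr{S}}$ is the set of treatment rules with $\mathbb{E}[T_s(U)]=1/2$ for all $s\in\mathcal{S}_P$ whenever $U\sim\mathcal{N}_m(0,\Sigma)$, for every positive definite diagonal $\Sigma$. Regret is $\mathcal{R}(T,\mathscr{S},\tau)=\frac{1}{\#\mathcal{S}_P}\sum_{s\in\mathcal{S}_P}\tau(X_s)\big(\mathbf{1}\{\tau(X_s)\ge0\}-\mathbb{E}_{\tau_{\mathscr{S}}}[T_s(\hat\tau_{\mathscr{S}})]\big)$. $N_{\mathscr{S}}(s)$ is the nearest neighbor of $s$ in $\mathscr{S}$ in Euclidean distance of covariates, with the smallest index chosen under ties. *)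

From HB Require Import structures.
From mathcomp Require Import all_boot all_order all_algebra.
From mathcomp Require Import all_classical all_reals all_analysis.
Set Implicit Arguments. Unset Strict Implicit. Unset Printing Implicit Defensive.
Import Order.TTheory GRing.Theory Num.Theory.
Local Open Scope classical_set_scope.
Local Open Scope ring_scope.

Section Defs.
Variable R : realType.

Definition enorm (d : nat) (v : 'rV[R]_d) : R :=
  Num.sqrt (\sum_(i < d) v ord0 i ^+ 2).

Definition LipC (d : nat) (C : R) : set ('rV[R]_d -> R) :=
  [set tau | forall x y, `|tau x - tau y| <= C * enorm (x - y)].

(* Expectation E[f(U)] for U ~ N_m(mu, diag(sd_1^2,...,sd_m^2)), i.e. for
   independent coordinates U_i ~ N(mu_i, sd_i^2), computed as the iterated
   Lebesgue integral against the product of the normal laws. *)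
Fixpoint gauss_expect (m : nat) : m.-tuple R -> m.-tuple R -> (m.-tuple R -> R) -> R :=
  match m with
  | 0 => fun _ _ f => f [tuple]
  | m'.+1 => fun mu sd f =>
      Rintegral (normal_prob (thead mu) (thead sd)) setT
        (fun x => gauss_expect (behead_tuple mu) (behead_tuple sd)
                    (fun t => f [tuple of x :: t]))
  end.

Variables (S d : nat) (X : 'I_S -> 'rV[R]_d) (sigma : 'I_S -> R)
  (SP : {set 'I_S}).

(* tau_{Sc} = (tau(X_{Sc_i}))_i with Sc_1 < ... < Sc_m (enum of a set of
   ordinals is increasing) *)
Definition tau_at (Sc : {set 'I_S}) (tau : 'rV[R]_d -> R) : #|Sc|.-tuple R :=
  [tuple tau (X (enum_val i)) | i < #|Sc|].

Definition sd_at (Sc : {set 'I_S}) : #|Sc|.-tuple R :=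
  [tuple sigma (enum_val i) | i < #|Sc|].

(* Treatment rules: T u s is the component T_s(u), relevant for s in SP.
   Measurable, [0,1]-valued. *)
Definition treatment_rule (Sc : {set 'I_S}) (T : #|Sc|.-tuple R -> 'I_S -> R) : Prop :=
  forall s, s \in SP ->
    measurable_fun setT (fun u => T u s) /\ (forall u, 0 <= T u s <= 1).

Definition Thalf (Sc : {set 'I_S}) : set (#|Sc|.-tuple R -> 'I_S -> R) :=
  [set T | treatment_rule T /\
     forall sd : #|Sc|.-tuple R, (forall i, 0 < tnth sd i) ->
       forall s, s \in SP ->
         gauss_expect [tuple 0 | _ < #|Sc|] sd (fun u => T u s) = 1 / 2].

Definition regret (Sc : {set 'I_S}) (T : #|Sc|.-tuple R -> 'I_S -> R)
  (tau : 'rV[R]_d -> R) : R :=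
  (#|SP|%:R)^-1 * \sum_(s in SP)
     tau (X s) * ((if 0 <= tau (X s) then 1 else 0)
                  - gauss_expect (tau_at Sc tau) (sd_at Sc) (fun u => T u s)).

(* Nearest neighbour of s in Sc, smallest index under ties
   (default s if Sc is empty, never used). *)
Definition nearest (Sc : {set 'I_S}) (s : 'I_S) : 'I_S :=
  odflt s [pick j | [&& j \in Sc,
     [forall j' in Sc, enorm (X s - X j) <= enorm (X s - X j')] &
     [forall j' in Sc,
        (enorm (X s - X j') <= enorm (X s - X j)) ==> (j <= j')%N]]].

End Defs.

Arguments Thalf {R S} SP Sc _.
Arguments regret {R S d} X sigma SP Sc T tau.
Arguments LipC {R} d C _.

From HB Require Import structures.
From mathcomp Require Import all_boot all_order all_algebra.
From mathcomp Require Import all_classical all_reals all_analysis.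
From mathcomp Require Import ring lra.
Set Implicit Arguments. Unset Strict Implicit. Unset Printing Implicit Defensive.
Import Order.TTheory GRing.Theory Num.Theory.
Local Open Scope classical_set_scope.
Local Open Scope ring_scope.

(* The lower bound is attained by a single adversarial effect: C times the
   distance to the sampled covariates.  It is C-Lipschitz and vanishes on the
   sample, so the observed estimates are pure noise and any rule in T^{1/2}
   treats every prediction site with probability 1/2; each such site then
   contributes half of its (nonnegative) effect to the regret, and that effect
   is at least C times the distance to the nearest sampled neighbour. *)

Section CauchySchwarz.
Variables (R : realType) (I : finType).

Lemma sum_mul_sqr_le (a b : I -> R) :
  (\sum_i a i * b i) ^+ 2 <= (\sum_i a i ^+ 2) * (\sum_i b i ^+ 2).
Proof.
set A := \sum_i a i ^+ 2; set B := \sum_i b i ^+ 2; set P := \sum_i a i * b i.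
have lagrange : \sum_i \sum_j (a i * b j - a j * b i) ^+ 2 = 2 * (A * B - P ^+ 2).
  transitivity (\sum_i \sum_j (a i ^+ 2 * b j ^+ 2 + a j ^+ 2 * b i ^+ 2
                               - 2 * ((a i * b i) * (a j * b j)))).
    by apply: eq_bigr => i _; apply: eq_bigr => j _; ring.
  rewrite (eq_bigr (fun i => a i ^+ 2 * B + A * b i ^+ 2 - 2 * (a i * b i) * P)).
    by rewrite !big_split /= !sumrN -!mulr_suml -!mulr_sumr -/A -/B -/P; ring.
  move=> i _; rewrite !big_split /= sumrN -!mulr_sumr -!mulr_suml.
  by rewrite -/A -/B -/P; ring.
have : 0 <= \sum_i \sum_j (a i * b j - a j * b i) ^+ 2.
  by apply: sumr_ge0 => i _; apply: sumr_ge0 => j _; exact: sqr_ge0.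
by rewrite lagrange pmulr_rge0 // subr_ge0.
Qed.
End CauchySchwarz.

Section EuclideanNorm.
Variables (R : realType) (d : nat).
Implicit Types u v : 'rV[R]_d.

Lemma enorm_ge0 v : 0 <= enorm v.
Proof. exact: sqrtr_ge0. Qed.

Lemma enorm0 : enorm (0 : 'rV[R]_d) = 0.
Proof. by rewrite /enorm big1 ?sqrtr0 // => i _; rewrite mxE expr0n. Qed.

Lemma enormN v : enorm (- v) = enorm v.
Proof.
by rewrite /enorm; congr Num.sqrt; apply: eq_bigr => i _; rewrite mxE sqrrN.
Qed.

Lemma enorm_distC u v : enorm (u - v) = enorm (v - u).
Proof. by rewrite -enormN opprB. Qed.

Lemma ler_enormD u v : enorm (u + v) <= enorm u + enorm v.
Proof.
have sqr_enorm w : enorm w ^+ 2 = \sum_i w ord0 i ^+ 2.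
  by rewrite sqr_sqrtr //; apply: sumr_ge0 => i _; exact: sqr_ge0.
set P := \sum_i u ord0 i * v ord0 i.
have P_le : P <= enorm u * enorm v.
  rewrite -sqrtrM; last by apply: sumr_ge0 => i _; exact: sqr_ge0.
  rewrite (le_trans (ler_norm P)) // -sqrtr_sqr ler_wsqrtr //.
  exact: sum_mul_sqr_le.
have sqr_enormD : enorm (u + v) ^+ 2 = enorm u ^+ 2 + 2 * P + enorm v ^+ 2.
  rewrite !sqr_enorm mulr_sumr -!big_split /=.
  by apply: eq_bigr => i _; rewrite mxE; ring.
rewrite -(@ler_pXn2r _ 2) ?nnegrE ?addr_ge0 ?enorm_ge0 //.
by rewrite sqr_enormD sqrrD; lra.
Qed.

End EuclideanNorm.

Section SetDistance.
Variables (R : realType) (S d : nat) (X : 'I_S -> 'rV[R]_d).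
Variables (A : {set 'I_S}) (j0 : 'I_S).
Hypothesis j0A : j0 \in A.

Definition setdist (x : 'rV[R]_d) : R :=
  enorm (x - X [arg min_(j < j0 in A) enorm (x - X j)]%O).

Lemma setdist_le x j : j \in A -> setdist x <= enorm (x - X j).
Proof. by rewrite /setdist; case: arg_minP => // i _ /[apply]. Qed.

Lemma setdist_attained x : exists2 j, j \in A & setdist x = enorm (x - X j).
Proof. by rewrite /setdist; case: arg_minP => // j jA _; exists j. Qed.

Lemma setdist_ge0 x : 0 <= setdist x.
Proof. exact: enorm_ge0. Qed.

Lemma setdist_eq0 j : j \in A -> setdist (X j) = 0.
Proof.
move=> jA; apply/le_anti; rewrite setdist_ge0 andbT.
by rewrite -(enorm0 R d) -(subrr (X j)) setdist_le.
Qed.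

Lemma setdist_le_add x y : setdist x <= setdist y + enorm (x - y).
Proof.
have [j jA ->] := setdist_attained y.
rewrite (le_trans (setdist_le x jA)) //.
have -> : x - X j = (x - y) + (y - X j) by rewrite addrA subrK.
by rewrite addrC ler_enormD.
Qed.

Lemma setdist_lipschitz x y : `|setdist x - setdist y| <= enorm (x - y).
Proof.
rewrite ler_norml; have := setdist_le_add x y; have := setdist_le_add y x.
by rewrite enorm_distC; lra.
Qed.

Lemma enorm_nearest_le s : enorm (X s - X (nearest X A s)) <= setdist (X s).
Proof.
rewrite /nearest; case: pickP => [j /and3P[_ /forall_inP nearest_min _]|_] /=.
  by have [i iA ->] := setdist_attained (X s); exact: nearest_min.
by rewrite subrr enorm0 setdist_ge0.
Qed.

End SetDistance.

Section VanishingEffect.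
Variables (R : realType) (S d : nat) (X : 'I_S -> 'rV[R]_d) (sigma : 'I_S -> R).
Variables (SP Sc : {set 'I_S}) (tau : 'rV[R]_d -> R).
Hypothesis tau_Sc : {in Sc, forall j, tau (X j) = 0}.

Lemma tau_at_eq0 : tau_at X Sc tau = [tuple 0 | _ < #|Sc|].
Proof.
by apply: eq_from_tnth => i; rewrite !tnth_mktuple tau_Sc ?enum_valP.
Qed.

Lemma regret_vanishing T :
  (forall s, 0 < sigma s) -> Thalf SP Sc T -> {in SP, forall s, 0 <= tau (X s)} ->
  regret X sigma SP Sc T tau = (#|SP|%:R)^-1 * \sum_(s in SP) tau (X s) / 2.
Proof.
move=> sigma_gt0 [_ T_half] tau_ge0; rewrite /regret; congr (_ * _).
apply: eq_bigr => s sSP; rewrite tau_at_eq0 T_half ?tau_ge0 //; last first.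
  by move=> i; rewrite tnth_mktuple.
by rewrite mulrBr mulr1; field.
Qed.

End VanishingEffect.

Theorem lemma2 (R : realType) (S d : nat) (X : 'I_S -> 'rV[R]_d)
  (sigma : 'I_S -> R) (SE SP : {set 'I_S}) (k : nat)
  (hsigma : forall s, 0 < sigma s)
  (hSE : (2 <= #|SE|)%N) (hSP : (0 < #|SP|)%N)
  (hk1 : (1 <= k)%N) (hk2 : (k < #|SE|)%N)
  (hA2 : injective X)
  (C : R) (hC : 0 < C)
  (Sc : {set 'I_S}) (hScE : Sc \subset SE) (hSc0 : (0 < #|Sc|)%N)
  (hSck : (#|Sc| <= k)%N) :
  (((C / 2) * ((#|SP|%:R)^-1 *
     \sum_(s in SP :\: Sc) enorm (X s - X (nearest X Sc s))))%:E
  <= ereal_inf [set ereal_sup [set (regret X sigma SP Sc T tau)%:E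
                               | tau in LipC d C]
               | T in Thalf SP Sc])%E.
Proof.
have [j0 j0Sc] : exists j0, j0 \in Sc by apply/set0Pn; rewrite -card_gt0.
pose tau x := C * setdist X Sc j0 x.
have tau_Lip : LipC d C tau.
  by move=> x y; rewrite /tau -mulrBr normrM gtr0_norm // ler_pM2l // setdist_lipschitz.
have tau_Sc : {in Sc, forall j, tau (X j) = 0}.
  by move=> j jSc; rewrite /tau setdist_eq0 ?mulr0.
have tau_ge0 x : 0 <= tau x by apply: mulr_ge0; [exact: ltW | exact: setdist_ge0].
apply: le_ereal_inf_tmp => _ [T TH <-].
apply: (@le_trans _ _ (regret X sigma SP Sc T tau)%:E); last first.
  by apply: ereal_sup_ubound; exists tau.
rewrite lee_fin (regret_vanishing tau_Sc) //.
rewrite [in leRHS](big_setID Sc) /= [in leRHS]big1 ?add0r; last first.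
  by move=> s /setIP[_ /tau_Sc ->]; rewrite mul0r.
rewrite mulrCA mulr_sumr; apply: ler_wpM2l; first by rewrite invr_ge0.
apply: ler_sum => s _; rewrite /tau mulrAC ler_pM2r ?invr_gt0 // ler_pM2l //.
exact: enorm_nearest_le.
Qed.
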